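(* Let $Q$ be a right Leibniz algebra, $L$ a subalgebra of $Q$, and $q\in Q$. (1) If $Q$ is an algebra of quotients of $L$, then $(L:q)$ is an essential ideal of $L$ and $\mathrm{Ann}_L((L:q))=\{0\}$. (2) If $Q$ is ideally absorbed into $L$, then $(L:q)$ is an essential ideal of $L$ and $\mathrm{Ann}_L((L:q))=\{0\}$.
   Context: A right Leibniz algebra satisfies $[x,[y,z]]=[[x,y],z]-[[x,z],y]$. Ideals: subspaces $I$ with $[I,L]\subseteq I$, $[L,I]\subseteq I$; an ideal is essential if it meets every nonzero ideal nontrivially. $\mathrm{Ann}_L(H)=\{x\in L:[x,y]=[y,x]=0\ \forall y\in H\}$. For $x\in L$, $R_x(u)=[u,x]$, $L_x(u)=[x,u]$ on $Q$, $\mathscr{A}(L)$ the associative algebra they generate, ${}_L(q)=\mathbb{F}q+\{\sum\xi_i(q):\xi_i\in\mathscr{A}(L)\}$, $(L:q)=\{x\in L:[x,{}_L(q)]\subseteq L,[{}_L(q),x]\subseteq L\}$. $Q$ is an algebra of quotients of $L$ if for all $p,q\in Q$, $p\ne0$, there is $x\in(L:q)$ with $[x,p]\ne0$ or $y\in(L:q)$ with $[p,y]\ne0$. $Q$ is ideally absorbed into $L$ if for each $0\ne q\in Q$ there is an ideal $I$ of $L$ with $\mathrm{Ann}_L(I)=\{0\}$ such that $[I,q]\ne\{0\}$ or $[q,I]\ne\{0\}$, and both $[I,q],[q,I]\subseteq L$. *)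

From HB Require Import structures.
From mathcomp Require Import all_boot all_algebra.
Set Implicit Arguments. Unset Strict Implicit. Unset Printing Implicit Defensive.
Import GRing.Theory.
Local Open Scope ring_scope.

Section Leibniz.
Variables (F : fieldType) (Q : lmodType F) (br : Q -> Q -> Q).

Definition bilinear_bracket : Prop :=
  (forall (a : F) (u v w : Q), br (a *: u + v) w = a *: br u w + br v w) /\
  (forall (a : F) (u v w : Q), br w (a *: u + v) = a *: br w u + br w v).

Definition right_Leibniz_identity : Prop :=
  forall x y z : Q, br x (br y z) = br (br x y) z - br (br x z) y.

Definition right_Leibniz_algebra : Prop :=
  bilinear_bracket /\ right_Leibniz_identity.

Definition is_subspace (S : Q -> Prop) : Prop :=
  S 0 /\ (forall u v, S u -> S v -> S (u + v)) /\
  (forall (a : F) u, S u -> S (a *: u)).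

Definition is_subalgebra (L : Q -> Prop) : Prop :=
  is_subspace L /\ (forall x y, L x -> L y -> L (br x y)).

Definition is_ideal (L I : Q -> Prop) : Prop :=
  is_subspace I /\ (forall x, I x -> L x) /\
  (forall x y, I x -> L y -> I (br x y)) /\
  (forall x y, I x -> L y -> I (br y x)).

Definition is_essential_ideal (L I : Q -> Prop) : Prop :=
  is_ideal L I /\
  forall J, is_ideal L J -> (exists x, J x /\ x <> 0) ->
    exists x, I x /\ J x /\ x <> 0.

Definition Ann (L H : Q -> Prop) : Q -> Prop :=
  fun x => L x /\ forall y, H y -> br x y = 0 /\ br y x = 0.

Definition Ann_trivial (L H : Q -> Prop) : Prop :=
  forall x, Ann L H x <-> x = 0.

(* A(L): the associative algebra of maps Q -> Q generated by
   R_x (u |-> [u,x]) and L_x (u |-> [x,u]) for x in L. *)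
Inductive mult_alg (L : Q -> Prop) : (Q -> Q) -> Prop :=
  | ma_R x : L x -> mult_alg L (fun u => br u x)
  | ma_L x : L x -> mult_alg L (fun u => br x u)
  | ma_zero : mult_alg L (fun _ => 0)
  | ma_add f g : mult_alg L f -> mult_alg L g -> mult_alg L (fun u => f u + g u)
  | ma_scale (a : F) f : mult_alg L f -> mult_alg L (fun u => a *: f u)
  | ma_comp f g : mult_alg L f -> mult_alg L g -> mult_alg L (fun u => f (g u)).

Definition sub_gen (L : Q -> Prop) (q : Q) : Q -> Prop :=
  fun u => exists (a : F) (xis : seq (Q -> Q)),
    (forall i, (i < size xis)%N -> mult_alg L (nth (fun _ => 0) xis i)) /\
    u = a *: q + \sum_(xi <- xis) xi q.

Definition colon (L : Q -> Prop) (q : Q) : Q -> Prop :=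
  fun x => L x /\ forall u, sub_gen L q u -> L (br x u) /\ L (br u x).

Definition algebra_of_quotients (L : Q -> Prop) : Prop :=
  forall p q : Q, p <> 0 ->
    (exists x, colon L q x /\ br x p <> 0) \/
    (exists y, colon L q y /\ br p y <> 0).

Definition ideally_absorbed (L : Q -> Prop) : Prop :=
  forall q : Q, q <> 0 ->
    exists I, is_ideal L I /\ Ann_trivial L I /\
      ((exists x, I x /\ br x q <> 0) \/ (exists x, I x /\ br q x <> 0)) /\
      (forall x, I x -> L (br x q)) /\ (forall x, I x -> L (br q x)).

End Leibniz.

From mathcomp Require Import all_boot all_algebra.
From Stdlib Require Import Classical.
Set Implicit Arguments. Unset Strict Implicit. Unset Printing Implicit Defensive.
Import GRing.Theory.
Local Open Scope ring_scope.

(* Call x and u mutually absorbed when [x,u] and [u,x] both lie in L; this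
   relation is symmetric and linear in each argument, and (L:q) consists of the
   x in L absorbing every element of _L(q).  The right Leibniz identity moves a
   bracket with an element of L from one side of the relation to the other, which
   shows both that (L:q) is an ideal and that any ideal I with [I,q] + [q,I] in L
   is contained in (L:q).  Since Ann_L is antitone, (L:q) has trivial annihilator
   as soon as some such I does: for algebras of quotients this is the defining
   property applied to a putative annihilating element, and for ideally absorbed
   algebras I is the ideal absorbing q (or L itself when q = 0).  An ideal with
   trivial annihilator is essential, since a nonzero element of any ideal J
   brackets nontrivially with some element of I, and that bracket lies in I and J. *)

Section LeibnizColon.
Variables (F : fieldType) (Q : lmodType F) (br : Q -> Q -> Q).
Hypothesis bil : bilinear_bracket br.
Hypothesis leibniz : right_Leibniz_identity br.
Variable L : Q -> Prop.
Hypothesis subL : is_subalgebra br L.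

Lemma brDl u v w : br (u + v) w = br u w + br v w.
Proof. by have := (proj1 bil) 1 u v w; rewrite !scale1r. Qed.

Lemma brDr u v w : br w (u + v) = br w u + br w v.
Proof. by have := (proj2 bil) 1 u v w; rewrite !scale1r. Qed.

Lemma br0l w : br 0 w = 0.
Proof. by apply: (addrI (br 0 w)); rewrite -brDl !addr0. Qed.

Lemma br0r w : br w 0 = 0.
Proof. by apply: (addrI (br w 0)); rewrite -brDr !addr0. Qed.

Lemma brZl a u w : br (a *: u) w = a *: br u w.
Proof. by have := (proj1 bil) a u 0 w; rewrite !addr0 br0l addr0. Qed.

Lemma brZr a u w : br w (a *: u) = a *: br w u.
Proof. by have := (proj2 bil) a u 0 w; rewrite !addr0 br0r addr0. Qed.

Lemma br_brl x y z : br (br x y) z = br x (br y z) + br (br x z) y.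
Proof. by rewrite leibniz subrK. Qed.

Lemma subalg0 : L 0.
Proof. by case: subL => [[]]. Qed.

Lemma subalgD u v : L u -> L v -> L (u + v).
Proof. by case: subL => [[_ [LD _]] _]; apply: LD. Qed.

Lemma subalgZ a u : L u -> L (a *: u).
Proof. by case: subL => [[_ [_ LZ]] _]; apply: LZ. Qed.

Lemma subalgB u v : L u -> L v -> L (u - v).
Proof. by move=> Lu Lv; rewrite -scaleN1r; apply/subalgD/subalgZ. Qed.

Lemma subalg_br u v : L u -> L v -> L (br u v).
Proof. by case: subL => _; apply. Qed.

Lemma subalg_ideal : is_ideal br L L.
Proof. by split; [case: subL | split=> //; split=> *; apply: subalg_br]. Qed.

Definition absorbs x u := L (br x u) /\ L (br u x).

Lemma absorbsC x u : absorbs x u <-> absorbs u x.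
Proof. by split=> [[]|[]]. Qed.

Lemma absorbs_subspace u : is_subspace (absorbs^~ u).
Proof.
split; [|split].
- by rewrite /absorbs br0l br0r; split; exact: subalg0.
- by move=> x y [Lxu Lux] [Lyu Luy]; rewrite /absorbs brDl brDr; split; apply: subalgD.
- by move=> a x [Lxu Lux]; rewrite /absorbs brZl brZr; split; apply: subalgZ.
Qed.

Lemma absorbs_subspace_r x : is_subspace (absorbs x).
Proof.
have [A0 [AD AZ]] := absorbs_subspace x.
split; [|split].
- exact/absorbsC.
- by move=> u v /absorbsC Axu /absorbsC Axv; apply/absorbsC/AD.
- by move=> a u /absorbsC Axu; apply/absorbsC/AZ.
Qed.

Lemma absorbs_brr x u y : L y ->
  absorbs x u -> absorbs x (br u y) -> absorbs x (br y u) -> absorbs (br x y) u.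
Proof.
move=> Ly [Lxu Lux] [_ Luy_x] [Lx_yu _]; split.
- by rewrite br_brl; apply: subalgD => //; apply: subalg_br.
- by rewrite leibniz; apply: subalgB => //; apply: subalg_br.
Qed.

Lemma absorbs_brl x u y : L y ->
  absorbs x u -> absorbs x (br u y) -> absorbs x (br y u) -> absorbs (br y x) u.
Proof.
move=> Ly [Lxu Lux] [_ Luy_x] [_ Lyu_x]; split.
- by rewrite br_brl; apply: subalgD => //; apply: subalg_br.
- by rewrite leibniz; apply: subalgB => //; apply: subalg_br.
Qed.

Lemma sub_genP q u :
  sub_gen br L q u <-> exists a f, mult_alg br L f /\ u = a *: q + f q.
Proof.
split.
- case=> a [xis [Hxis ->]]; exists a.
  suff [f [Af ->]] : exists f, mult_alg br L f /\ \sum_(xi <- xis) xi q = f q.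
    by exists f.
  elim: xis Hxis => [|g xis IH] Hxis.
    by exists (fun=> 0); split; [constructor | rewrite big_nil].
  have [f [Af Ef]] := IH (fun i => Hxis i.+1).
  exists (fun w => g w + f w); split; last by rewrite big_cons Ef.
  by apply: ma_add => //; exact: (Hxis 0%N).
- case=> a [f [Af ->]]; exists a, [:: f]; split; first by case.
  by rewrite big_cons big_nil addr0.
Qed.

Lemma sub_gen_brr q u y : L y -> sub_gen br L q u -> sub_gen br L q (br u y).
Proof.
move=> Ly /sub_genP [a [f [Af ->]]]; apply/sub_genP.
exists 0, (fun w => a *: br w y + br (f w) y); split.
  apply: ma_add; first by apply/ma_scale/ma_R.
  by apply: (ma_comp (f := br^~ y)) => //; exact: ma_R.
by rewrite scale0r add0r brDl brZl.
Qed.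

Lemma sub_gen_brl q u y : L y -> sub_gen br L q u -> sub_gen br L q (br y u).
Proof.
move=> Ly /sub_genP [a [f [Af ->]]]; apply/sub_genP.
exists 0, (fun w => a *: br y w + br y (f w)); split.
  apply: ma_add; first by apply/ma_scale/ma_L.
  by apply: (ma_comp (f := br y)) => //; exact: ma_L.
by rewrite scale0r add0r brDr brZr.
Qed.

Lemma sub_gen_ind (P : Q -> Prop) q :
  is_subspace P -> P q ->
  (forall u y, L y -> P u -> P (br u y)) ->
  (forall u y, L y -> P u -> P (br y u)) ->
  forall u, sub_gen br L q u -> P u.
Proof.
move=> [P0 [PD PZ]] Pq PR PL u /sub_genP [a [f [Af ->]]].
have closed_mult_alg g : mult_alg br L g -> forall v, P v -> P (g v).
  by elim=> {g} [x Lx|x Lx||g h _ IHg _ IHh|b g _ IHg|g h _ IHg _ IHh] v Pv /=; auto.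
by apply: PD; [apply: PZ | apply: closed_mult_alg].
Qed.

Lemma colonP q x :
  colon br L q x <-> L x /\ forall u, sub_gen br L q u -> absorbs x u.
Proof. by []. Qed.

Lemma colon_ideal q : is_ideal br L (colon br L q).
Proof.
split; [split; [|split] | split; [|split]].
- by apply/colonP; split=> [|u _]; [exact: subalg0 | case: (absorbs_subspace u)].
- move=> x y /colonP [Lx Ax] /colonP [Ly Ay]; apply/colonP.
  split=> [|u Gu]; first exact: subalgD.
  by have [_ [AD _]] := absorbs_subspace u; apply: AD; auto.
- move=> a x /colonP [Lx Ax]; apply/colonP; split=> [|u Gu]; first exact: subalgZ.
  by have [_ [_ AZ]] := absorbs_subspace u; apply: AZ; auto.
- by move=> x [].
- move=> x y /colonP [Lx Ax] Ly; apply/colonP; split=> [|u Gu]; first exact: subalg_br.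
  by apply: absorbs_brr => //; apply: Ax; [|apply: sub_gen_brr|apply: sub_gen_brl].
- move=> x y /colonP [Lx Ax] Ly; apply/colonP; split=> [|u Gu]; first exact: subalg_br.
  by apply: absorbs_brl => //; apply: Ax; [|apply: sub_gen_brr|apply: sub_gen_brl].
Qed.

Lemma ideal_sub_colon I q : is_ideal br L I ->
  (forall x, I x -> absorbs x q) -> forall x, I x -> colon br L q x.
Proof.
move=> [_ [IL [Ixy Iyx]]] Aq x Ix; split=> [|u Gu]; first exact: IL.
pose P u := forall z, I z -> absorbs z u.
suff : P u by apply.
apply: (sub_gen_ind (q := q)) => // [|v y Ly Pv z Iz|v y Ly Pv z Iz].
- split; [|split] => [z _|v w Pv Pw z Iz|a v Pv z Iz];
    have [A0 [AD AZ]] := absorbs_subspace_r z; auto.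
- by apply/absorbsC/absorbs_brr => //; apply/absorbsC; auto.
- by apply/absorbsC/absorbs_brl => //; apply/absorbsC; auto.
Qed.

Lemma Ann0 H : Ann br L H 0.
Proof. by split=> [|y _]; [exact: subalg0 | rewrite br0l br0r]. Qed.

Lemma Ann_trivialS H H' : (forall x, H x -> H' x) ->
  Ann_trivial br L H -> Ann_trivial br L H'.
Proof.
move=> sHH' annH x; split=> [[Lx Hx]|->]; last exact: Ann0.
by apply/annH; split=> // y /sHH'; apply: Hx.
Qed.

Lemma Ann_trivial_essential I : is_ideal br L I ->
  Ann_trivial br L I -> is_essential_ideal br L I.
Proof.
move=> idI annI; split=> // J [_ [JL [Jxy Jyx]]] [x [Jx nz_x]].
have [_ [IL [Ixy Iyx]]] := idI.
apply: NNPP => noIJ; apply/nz_x/annI; split=> [|y Iy]; first exact: JL.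
have Lx := JL x Jx; have Ly := IL y Iy.
split; apply: NNPP => nz; apply: noIJ.
- by exists (br x y); split; [|split]; auto.
- by exists (br y x); split; [|split]; auto.
Qed.

Lemma algebra_of_quotients_colon_Ann_trivial q :
  algebra_of_quotients br L -> Ann_trivial br L (colon br L q).
Proof.
move=> quot x; split=> [[Lx Ax]|->]; last exact: Ann0.
apply: NNPP => nz_x.
case: (quot x q nz_x) => [[y [Cy nz]] | [y [Cy nz]]]; apply: nz.
- exact: proj2 (Ax y Cy).
- exact: proj1 (Ax y Cy).
Qed.

Lemma ideally_absorbed_Ann_trivial :
  ideally_absorbed br L -> Ann_trivial br L L.
Proof.
move=> absorb x; split=> [[Lx Ax]|->]; last exact: Ann0.
apply: NNPP => nz_x.
have [I [[_ [IL _]] [_ [[[y [Iy nz]]|[y [Iy nz]]] _]]]] := absorb x nz_x; apply: nz.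
- exact: proj2 (Ax y (IL y Iy)).
- exact: proj1 (Ax y (IL y Iy)).
Qed.

Lemma ideally_absorbed_colon_Ann_trivial q :
  ideally_absorbed br L -> Ann_trivial br L (colon br L q).
Proof.
move=> absorb; have [->|/eqP nz_q] := eqVneq q 0.
  apply: (Ann_trivialS _ (ideally_absorbed_Ann_trivial absorb)).
  apply: (ideal_sub_colon subalg_ideal) => x _.
  by rewrite /absorbs br0l br0r; split; exact: subalg0.
have [I [idI [annI [_ [LIq LqI]]]]] := absorb q nz_q.
apply: (Ann_trivialS _ annI); apply: ideal_sub_colon => // x Ix.
by split; auto.
Qed.

End LeibnizColon.

Theorem proposition3p8 (F : fieldType) (Q : lmodType F) (br : Q -> Q -> Q)
  (HQ : right_Leibniz_algebra br) (L : Q -> Prop)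
  (HL : is_subalgebra br L) (q : Q) :
  (algebra_of_quotients br L ->
     is_essential_ideal br L (colon br L q) /\ Ann_trivial br L (colon br L q)) /\
  (ideally_absorbed br L ->
     is_essential_ideal br L (colon br L q) /\ Ann_trivial br L (colon br L q)).
Proof.
case: HQ => bil leibniz.
have essential := Ann_trivial_essential (colon_ideal bil leibniz HL q).
split=> [quot | absorb].
- have annC := algebra_of_quotients_colon_Ann_trivial bil HL q quot.
  by split; first exact: essential.
- have annC := ideally_absorbed_colon_Ann_trivial bil leibniz HL q absorb.
  by split; first exact: essential.
Qed.
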